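(* Let $m,n \ge 2$ be integers. The Cartesian product $K_m \times K_n$ is a circulant graph if and only if either $\gcd(m,n)=1$ or $m=n=2$.
   Context: The Cartesian product $G \times H$ of graphs $G$ and $H$ has vertex set $V(G)\times V(H)$, with $(g,h)$ adjacent to $(g',h')$ if and only if either $g=g'$ and $h$ is adjacent to $h'$ in $H$, or $h=h'$ and $g$ is adjacent to $g'$ in $G$. For an integer $n\ge 1$ and a set $S$ of integers, the circulant graph $C_nS$ has vertex set $\{0,1,\dots,n-1\}$, with $i$ adjacent to $j$ if and only if $i-j \equiv \pm s \pmod n$ for some $s\in S$. A graph is circulant if it is isomorphic to some $C_nS$; equivalently, if its automorphism group contains a cyclic subgroup acting transitively on the vertices. $K_n$ denotes the complete graph on $n$ vertices (no loops). *)

From mathcomp Require Import all_boot all_order all_algebra.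
Set Implicit Arguments. Unset Strict Implicit. Unset Printing Implicit Defensive.
Import GRing.Theory Num.Theory.
Local Open Scope ring_scope.

Definition complete_adj (n : nat) : rel 'I_n := fun i j => i != j.
Arguments complete_adj n : clear implicits.

Definition cart_adj (V W : finType) (g : rel V) (h : rel W) : rel (V * W) :=
  fun x y => ((x.1 == y.1) && h x.2 y.2) || ((x.2 == y.2) && g x.1 y.1).

Definition circulant_adj (N : nat) (S : pred int) : 'I_N -> 'I_N -> Prop :=
  fun i j => exists2 s : int, S s &
      (((i%:Z - j%:Z) = s %[mod N%:Z])%Z \/ ((i%:Z - j%:Z) = - s %[mod N%:Z])%Z).

Definition graph_iso (V W : finType) (g : rel V) (h : W -> W -> Prop) : Prop :=
  exists f : V -> W, bijective f /\ forall x y, g x y <-> h (f x) (f y).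

Definition is_circulant (V : finType) (g : rel V) : Prop :=
  exists N : nat, exists S : pred int, @graph_iso V ('I_N : finType) g (@circulant_adj N S).

From mathcomp Require Import all_boot all_order all_algebra.
From mathcomp Require Import zify.

Set Implicit Arguments.
Unset Strict Implicit.
Unset Printing Implicit Defensive.

Import GRing.Theory.

(* If K_m x K_n is isomorphic to C_N S, the rotation of C_N S pulls back to an
   automorphism phi of K_m x K_n such that phi^k fixes a vertex only when m n
   divides k.  Every automorphism of K_m x K_n either maps rows to rows and
   columns to columns, acting as a pair (al, be) of permutations, or exchanges
   rows and columns.  In the first case the orbit of a vertex has size
   lcm(order al, order be) <= m n, which forces gcd(m, n) = 1.  In the second
   case m = n and phi^2 returns to a well-chosen vertex after at most 2 m
   steps, so m^2 <= 2 m.  Conversely, the Chinese remainder theorem identifies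
   K_m x K_n with C_mn S for S the integers divisible by exactly one of m, n,
   and K_2 x K_2 is the 4-cycle. *)

Local Notation rook m n := (cart_adj (complete_adj m) (complete_adj n)).

Lemma rookE m n (x y : 'I_m * 'I_n) : rook m n x y = (x.1 == y.1) (+) (x.2 == y.2).
Proof. by rewrite /cart_adj /complete_adj; case: (x.1 == y.1); case: (x.2 == y.2). Qed.

Lemma rookC m n (x y : 'I_m * 'I_n) : rook m n x y = rook m n y x.
Proof. by rewrite !rookE eq_sym [x.2 == _]eq_sym. Qed.

Lemma rook_col_row m n (x y : 'I_m * 'I_n) :
  rook m n x y -> (x.2 == y.2) = ~~ (x.1 == y.1).
Proof. by rewrite rookE; case: (x.1 == y.1); case: (x.2 == y.2). Qed.

Lemma rook_common_neighbour m n (x y w : 'I_m * 'I_n) :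
  rook m n x y -> rook m n x w -> y != w ->
  rook m n y w = ((x.1 == y.1) == (x.1 == w.1)).
Proof.
case: x y w => [a b] [c d] [e f]; rewrite !rookE /= xpair_eqE.
case: (eqVneq a c) => ac; case: (eqVneq a e) => ae /=.
- by rewrite -ac -ae eqxx => _ _ /= /negbTE ->.
- by rewrite -ac (negbTE ae) => bd /eqP <- _; rewrite eq_sym (negbTE bd).
- by rewrite -ae [c == _]eq_sym (negbTE ac) => /eqP <- /negbTE ->.
- by move=> /eqP <- /eqP <-; rewrite eqxx andbT addbT.
Qed.

Section RookIsomorphism.

Variables m n m' n' : nat.
Variable phi : 'I_m * 'I_n -> 'I_m' * 'I_n'.
Hypothesis phi_inj : injective phi.
Hypothesis phi_rook : forall x y, rook m' n' (phi x) (phi y) = rook m n x y.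

Definition row_flip x y := ((phi x).1 == (phi y).1) (+) (x.1 == y.1).

Lemma row_flipC x y : row_flip x y = row_flip y x.
Proof. by rewrite /row_flip eq_sym [y.1 == _]eq_sym. Qed.

Lemma row_flip_neighbours x y w :
  rook m n x y -> rook m n x w -> row_flip x y = row_flip x w.
Proof.
move=> xy xw; case: (eqVneq y w) => [-> // | yw].
have phi_yw : phi y != phi w by apply: contra yw => /eqP/phi_inj->.
have := rook_common_neighbour (x := phi x) _ _ phi_yw; rewrite !phi_rook.
rewrite (rook_common_neighbour xy xw yw) /row_flip => /(_ xy xw).
by case: ((phi x).1 == _); case: ((phi x).1 == _); case: (x.1 == _); case: (x.1 == _).
Qed.

Lemma row_flip_edges x y u v :
  rook m n x u -> rook m n x y -> rook m n u v -> row_flip x y = row_flip u v.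
Proof.
move=> xu xy uv; rewrite (row_flip_neighbours xy xu) row_flipC.
by apply: row_flip_neighbours; rewrite // rookC.
Qed.

Lemma row_flip_const x y u v :
  rook m n x y -> rook m n u v -> row_flip x y = row_flip u v.
Proof.
move=> xy uv; case: (eqVneq x u) => [<- | xu] in uv *; first exact: row_flip_neighbours xy uv.
have [xu_rook | xu_far] := boolP (rook m n x u); first exact: (row_flip_edges xu_rook xy uv).
have [x1u1 x2u2] : x.1 != u.1 /\ x.2 != u.2.
  move: xu xu_far; rewrite rookE [x]surjective_pairing [u]surjective_pairing xpair_eqE /=.
  by case: (_ == _); case: (_ == _).
have zx : rook m n (u.1, x.2) x by rewrite rookE /= eq_sym (negbTE x1u1) eqxx.
have zu : rook m n (u.1, x.2) u by rewrite rookE /= eqxx (negbTE x2u2).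
have xz : rook m n x (u.1, x.2) by rewrite rookE /= (negbTE x1u1) eqxx.
by rewrite (row_flip_edges xz xy zx) (row_flip_edges zu zx uv).
Qed.

Lemma rook_iso_lines :
  (forall x y, rook m n x y -> ((phi x).1 == (phi y).1) = (x.1 == y.1)) \/
  (forall x y, rook m n x y -> ((phi x).2 == (phi y).2) = (x.1 == y.1)).
Proof.
have [/existsP [x0 /existsP [y0 /andP [x0y0 flip0]]] | no_flip] :=
  boolP [exists x, exists y, rook m n x y && row_flip x y].
  right=> x y xy; have := row_flip_const xy x0y0; rewrite flip0 /row_flip.
  rewrite (rook_col_row (_ : rook _ _ (phi x) (phi y))) ?phi_rook //.
  by case: (_ == _); case: (_ == _).
left=> x y xy; have : ~~ row_flip x y.
  by apply: contra no_flip => flip; apply/existsP; exists x; apply/existsP; exists y; rewrite xy.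
by rewrite /row_flip; case: (_ == _); case: (_ == _).
Qed.

Lemma rook_iso_prod (x0 : 'I_m * 'I_n) :
  (forall x y, rook m n x y -> ((phi x).1 == (phi y).1) = (x.1 == y.1)) ->
  exists al be, [/\ injective al, injective be & phi =1 fun x => (al x.1, be x.2)].
Proof.
move=> rows.
have row x y : x.1 = y.1 -> (phi x).1 = (phi y).1.
  case: x y => [a b] [c d] /= <-{c}; case: (eqVneq b d) => [-> // | bd].
  have : rook m n (a, b) (a, d) by rewrite rookE /= eqxx (negbTE bd).
  by move/rows; rewrite eqxx => /eqP.
have col x y : x.2 = y.2 -> (phi x).2 = (phi y).2.
  case: x y => [a b] [c d] /= <-{d}; case: (eqVneq a c) => [-> // | ac].
  have ab_cb : rook m n (a, b) (c, b) by rewrite rookE /= eqxx (negbTE ac).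
  have := rows _ _ ab_cb; rewrite /= (negbTE ac) => phi_ac.
  by move: ab_cb; rewrite -phi_rook => /rook_col_row; rewrite phi_ac => /eqP.
pose al a := (phi (a, x0.2)).1; pose be b := (phi (x0.1, b)).2.
have phiE : phi =1 fun x => (al x.1, be x.2).
  by move=> x; rewrite [phi x]surjective_pairing (row x (x.1, x0.2)) // (col x (x0.1, x.2)).
exists al, be; split=> //.
  by move=> a a' e; have /phi_inj [] : phi (a, x0.2) = phi (a', x0.2) by rewrite !phiE /= e.
by move=> b b' e; have /phi_inj [] : phi (x0.1, b) = phi (x0.1, b') by rewrite !phiE /= e.
Qed.

End RookIsomorphism.

Lemma rook_isoP m n m' n' (phi : 'I_m * 'I_n -> 'I_m' * 'I_n') (x0 : 'I_m * 'I_n) :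
  injective phi -> (forall x y, rook m' n' (phi x) (phi y) = rook m n x y) ->
  (exists al be, [/\ injective al, injective be & phi =1 fun x => (al x.1, be x.2)]) \/
  (exists eps del, [/\ injective eps, injective del & phi =1 fun x => (eps x.2, del x.1)]).
Proof.
move=> phi_inj phi_rook.
have [rows | cols] := rook_iso_lines phi_inj phi_rook; first by left; exact: rook_iso_prod.
right; pose psi := swap_pair \o phi.
have psi_inj : injective psi := inj_comp (can_inj swap_pairK) phi_inj.
have psi_rook x y : rook n' m' (psi x) (psi y) = rook m n x y.
  by rewrite rookE addbC -rookE phi_rook.
have [al [be [al_inj be_inj psiE]]] := rook_iso_prod psi_inj psi_rook x0 cols.
exists be, al; split=> // x.
by case: (psiE x) => <- <-; rewrite -surjective_pairing.
Qed.

Lemma iter_prod_map (T U : Type) (f : T -> T) (g : U -> U) k x :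
  iter k (fun y => (f y.1, g y.2)) x = (iter k f x.1, iter k g x.2).
Proof. by elim: k => [|k /= ->]; first case: x. Qed.

Lemma iter_order_mul (T : finType) (f : T -> T) (x : T) k :
  injective f -> iter (k * order f x) f x = x.
Proof. by move=> f_inj; rewrite iterM iter_fix // iter_order. Qed.

Lemma prod_map_cyclic_coprime (T U : finType) (f : T -> T) (g : U -> U) (x : T * U) :
  injective f -> injective g ->
  (forall k, iter k (fun y => (f y.1, g y.2)) x = x -> #|T| * #|U| %| k) ->
  coprime #|T| #|U|.
Proof.
move=> f_inj g_inj period.
have p_gt0 := order_gt0 f x.1; have q_gt0 := order_gt0 g x.2.
have p_le : order f x.1 <= #|T| := max_card _.
have q_le : order g x.2 <= #|U| := max_card _.
set p := order f x.1 in p_gt0 p_le *; set q := order g x.2 in q_gt0 q_le *.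
have f_lcm : iter (lcmn p q) f x.1 = x.1.
  by rewrite -(divnK (dvdn_lcml p q)) iter_order_mul.
have g_lcm : iter (lcmn p q) g x.2 = x.2.
  by rewrite -(divnK (dvdn_lcmr p q)) iter_order_mul.
have TU_le : #|T| * #|U| <= lcmn p q.
  apply: dvdn_leq; first by rewrite lcmn_gt0 p_gt0.
  by apply: period; rewrite iter_prod_map f_lcm g_lcm -surjective_pairing.
have lcm_le : lcmn p q <= p * q.
  by apply: dvdn_leq; rewrite ?muln_gt0 ?p_gt0 // dvdn_lcm dvdn_mulr ?dvdn_mull.
have [pT qU] : p = #|T| /\ q = #|U| by nia.
have := muln_lcm_gcd p q; rewrite /coprime -pT -qU; nia.
Qed.

(* On the vertices (b, g b), the square of the swap map acts through f \o g alone. *)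
Lemma swap_map_cyclic_card (T U : finType) (f : U -> T) (g : T -> U) (a : T) :
  injective f -> injective g ->
  (forall k, iter k (fun y => (f y.2, g y.1)) (a, g a) = (a, g a) -> #|T| * #|U| %| k) ->
  #|U| = #|T| /\ #|T| <= 2.
Proof.
move=> f_inj g_inj period.
have UT : #|U| = #|T| by apply/eqP; rewrite eqn_leq (leq_card _ f_inj) (leq_card _ g_inj).
have fg_inj : injective (f \o g) := inj_comp f_inj g_inj.
have iter_double k b :
    iter k.*2 (fun y => (f y.2, g y.1)) (b, g b) = (iter k (f \o g) b, g (iter k (f \o g) b)).
  by elim: k => // k IHk; rewrite doubleS !iterS IHk.
have p_gt0 := order_gt0 (f \o g) a.
have p_le : order (f \o g) a <= #|T| := max_card _.
have /dvdn_leq : #|T| * #|U| %| (order (f \o g) a).*2.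
  by apply: period; rewrite iter_double iter_order.
by rewrite double_gt0 UT => /(_ p_gt0); split=> //; nia.
Qed.

Lemma iter_ordS N (i : 'I_N) k : val (iter k (@ordS N) i) = (i + k) %% N.
Proof.
elim: k => [|k IHk] /=; first by rewrite addn0 modn_small.
by rewrite IHk -addn1 modnDml addn1 addnS.
Qed.

Section Circulant.

Local Open Scope ring_scope.

Lemma modzBm (a b d : int) : ((a %% d)%Z - (b %% d)%Z = a - b %[mod d])%Z.
Proof. by rewrite modzDml -modzDmr modzNm modzDmr. Qed.

Lemma circulant_adj_ordS N (S : pred int) (i j : 'I_N) :
  circulant_adj S (ordS i) (ordS j) <-> circulant_adj S i j.
Proof.
rewrite /circulant_adj; have -> : ((ordS i)%:Z - (ordS j)%:Z = i%:Z - j%:Z %[mod N%:Z])%Z.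
  by rewrite /= -!modz_nat modzBm !intS opprD addrACA subrr add0r.
by [].
Qed.

Lemma circulant_cyclic_automorphism (V : finType) (g : rel V) :
  is_circulant g ->
  exists phi : V -> V, [/\ injective phi, forall x y, g (phi x) (phi y) = g x y
    & forall k x, iter k phi x = x -> (#|V| %| k)%N].
Proof.
case=> N [S [f [f_bij f_adj]]].
have cardV : #|V| = N by rewrite (bij_eq_card f_bij) card_ord.
have [f' fK f'K] := f_bij.
pose phi x := f' (ordS (f x)).
have iter_phi k x : iter k phi x = f' (iter k (@ordS N) (f x)).
  by elim: k => [|k IHk] /=; rewrite ?fK // IHk /phi f'K.
exists phi; split.
- by move=> x y /(can_inj f'K) /ordS_inj /(can_inj fK).
- move=> x y; apply/idP/idP => /f_adj; last by move=> xy; apply/f_adj; rewrite !f'K circulant_adj_ordS.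
  by rewrite !f'K circulant_adj_ordS => /f_adj.
move=> k x; rewrite iter_phi cardV => /(congr1 (val \o f)); rewrite /= f'K iter_ordS => e.
have : k = 0 %[mod N] by apply/eqP; rewrite -(eqn_modDl (f x)) addn0 e modn_small.
by rewrite mod0n => /eqP.
Qed.

Lemma circulant_adjE N (S : pred int) :
  (forall s t, (s = t %[mod N%:Z])%Z -> S s = S t) -> (forall s, S (- s) = S s) ->
  forall i j : 'I_N, circulant_adj S i j <-> S (i%:Z - j%:Z).
Proof.
move=> S_mod S_opp i j; split; last by exists (i%:Z - j%:Z); last left.
by case=> s Ss [/S_mod -> | /S_mod ->]; rewrite ?S_opp.
Qed.

Lemma dvdz_eq_mod (d N : nat) (s t : int) :
  (d %| N)%N -> (s = t %[mod N%:Z])%Z -> (d%:Z %| s)%Z = (d%:Z %| t)%Z.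
Proof.
move=> /dvdnP [q ->] /eqP; rewrite eqz_mod_dvd PoszM => /(dvdz_trans (dvdz_mull _ (dvdzz _))).
by move=> dvd_st; rewrite -(subrK t s) rpredDl.
Qed.

Lemma eqn_mod_dvdz (d u v : nat) : (u == v %[mod d]) = (d%:Z %| u%:Z - v%:Z)%Z.
Proof. by rewrite -eqz_mod_dvd !modz_nat eqz_nat. Qed.

Lemma rook_circulant_coprime m n :
  (0 < m * n)%N -> coprime m n -> is_circulant (rook m n).
Proof.
move=> mn_gt0 co.
pose F (x : 'I_m * 'I_n) : 'I_(m * n) := Ordinal (ltn_pmod (chinese m n x.1 x.2) mn_gt0).
have Fm x : F x = x.1 %[mod m] by rewrite /= modn_dvdm ?dvdn_mulr // chinese_modl.
have Fn x : F x = x.2 %[mod n] by rewrite /= modn_dvdm ?dvdn_mull // chinese_modr.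
exists (m * n)%N, (fun s => (m%:Z %| s)%Z (+) (n%:Z %| s)%Z), F; split.
  apply: inj_card_bij; last by rewrite card_prod !card_ord.
  move=> [a b] [c d] eF.
  have := Fm (a, b); rewrite eF Fm /= !modn_small // => /val_inj ->.
  by have := Fn (a, b); rewrite eF Fn /= !modn_small // => /val_inj ->.
move=> x y; rewrite circulant_adjE; first last.
- by move=> s; rewrite !rpredN.
- by move=> s t st; rewrite (dvdz_eq_mod (dvdn_mulr _ (dvdnn m)) st)
    (dvdz_eq_mod (dvdn_mull _ (dvdnn n)) st).
by rewrite -!eqn_mod_dvdz !Fm !Fn !modn_small // rookE.
Qed.

Lemma rook22_circulant : is_circulant (rook 2 2).
Proof.
(* F lists the 4-cycle (0,0), (0,1), (1,1), (1,0) in order. *)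
have F_lt (x : 'I_2 * 'I_2) : (2 * x.1 + (x.1 != x.2) < 4)%N.
  by case: x => [[[|[|?]] ?] [[|[|?]] ?]].
pose F x := Ordinal (F_lt x).
exists 4%N, (fun s => ~~ (2%:Z %| s)%Z), F; split.
  apply: inj_card_bij; last by rewrite card_prod !card_ord.
  move=> x y /(congr1 val) /=.
  case: x y => [[[|[|a]] ?] [[|[|b]] ?]] [[[|[|c]] ?] [[|[|d]] ?]] //= _;
    by congr pair; apply: val_inj.
move=> x y; rewrite circulant_adjE; first last.
- by move=> s; rewrite rpredN.
- by move=> s t; move/(dvdz_eq_mod (isT : (2 %| 4)%N)) ->.
rewrite -eqn_mod_dvdz rookE.
by case: x y => [[[|[|a]] ?] [[|[|b]] ?]] [[[|[|c]] ?] [[|[|d]] ?]].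
Qed.

End Circulant.

Theorem corollary5 (m n : nat) (hm : 2 <= m) (hn : 2 <= n) :
  is_circulant (cart_adj (complete_adj m) (complete_adj n)) <->
  coprime m n \/ (m = 2 /\ n = 2).
Proof.
have m_gt0 : 0 < m by apply: leq_trans hm.
have n_gt0 : 0 < n by apply: leq_trans hn.
split=> [/circulant_cyclic_automorphism [phi [phi_inj phi_rook period]] | ].
  rewrite card_prod !card_ord in period; pose x0 := (Ordinal m_gt0, Ordinal n_gt0).
  have [[al [be [al_inj be_inj phiE]]] | [eps [del [eps_inj del_inj phiE]]]] :=
    rook_isoP x0 phi_inj phi_rook.
    left; have := @prod_map_cyclic_coprime _ _ al be x0 al_inj be_inj.
    by rewrite !card_ord; apply=> k; rewrite -(eq_iter phiE); apply: period.
  right; have [|nm m_le2] := @swap_map_cyclic_card _ _ eps del (Ordinal m_gt0) eps_inj del_inj.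
    by move=> k; rewrite -(eq_iter phiE) !card_ord; apply: period.
  rewrite !card_ord in nm m_le2; lia.
case=> [co | [-> ->]]; last exact: rook22_circulant.
by apply: rook_circulant_coprime; rewrite ?muln_gt0 ?m_gt0.
Qed.
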